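(* Let $(H,\cdot,1,\Delta,\varepsilon,\lhd)$ be a left Post-Hopf algebra, and suppose that $\Delta$ is cocommutative or that $H$ is connected as a coalgebra. Then $(H,\cdot^{\mathrm{op}},1,\Delta^{\mathrm{cop}},\varepsilon,\lhd^{\mathrm{op}})$ is a right Post-Hopf algebra, where $x\cdot^{\mathrm{op}}y=y\cdot x$, $x\lhd^{\mathrm{op}}y=y\lhd x$ and $\Delta^{\mathrm{cop}}=\tau\circ\Delta$ with $\tau(a\otimes b)=b\otimes a$.
   Context: Sweedler notation $\Delta(x)=x^{(1)}\otimes x^{(2)}$. The convolution algebra $\mathrm{Hom}(H,\mathrm{End}(H))$ (relative to the coproduct in use) has product $(f\star g)(x)=f(x^{(1)})\circ g(x^{(2)})$ and unit $x\mapsto\varepsilon(x)\mathrm{Id}_H$. A left Post-Hopf algebra is a Hopf algebra with a coalgebra morphism $\lhd:H\otimes H\to H$ such that $x\lhd(y\cdot z)=(x^{(1)}\lhd y)\cdot(x^{(2)}\lhd z)$, $x\lhd(y\lhd z)=\big(x^{(1)}\cdot(x^{(2)}\lhd y)\big)\lhd z$, and $\alpha_\lhd(x)(y)=x\lhd y$ defines an invertible element of the convolution algebra. A right Post-Hopf algebra is a Hopf algebra with a coalgebra morphism $\rhd:H\otimes H\to H$ such that $(x\cdot y)\rhd z=(x\rhd z^{(1)})\cdot(y\rhd z^{(2)})$, $(x\rhd y)\rhd z=x\rhd\big((y\rhd z^{(1)})\cdot z^{(2)}\big)$, and $\gamma_\rhd(x)(y)=y\rhd x$ defines an invertible element of the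 convolution algebra. Connectedness: with $\rho(x)=x-\varepsilon(x)1$, $\tilde\Delta(x)=\Delta(x)-1\otimes x-x\otimes 1$ on $\ker\varepsilon$, $\tilde\Delta(1)=0$, $\tilde\Delta^{(0)}=\rho$, $\tilde\Delta^{(k)}=(\tilde\Delta\otimes\mathrm{Id}^{\otimes k-1})\circ\tilde\Delta^{(k-1)}$, $H$ is connected as a coalgebra if every $x$ satisfies $\tilde\Delta^{(n)}(x)=0$ for some $n$. *)

(* Elements of H^{⊗m} are represented as finite formal sums of pure
   tensors (a [seq (seq H)] whose entries have length m); two such sums are
   equal in H^{⊗m} iff every m-multilinear map into every K-module agrees on
   them (universal property of the tensor product). *)
From HB Require Import structures.
From mathcomp Require Import all_boot all_order all_algebra.
Set Implicit Arguments.
Unset Strict Implicit.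
Unset Printing Implicit Defensive.
Import GRing.Theory.
Local Open Scope ring_scope.

Section PostHopf.
Variables (K : fieldType) (H : lmodType K).

Definition linear_map (V : lmodType K) (f : H -> V) :=
  forall (a : K) (x y : H), f (a *: x + y) = a *: f x + f y.

Definition bilinear_map (V : lmodType K) (f : H -> H -> V) :=
  (forall y, linear_map (fun x => f x y)) /\ (forall x, linear_map (f x)).

Definition multilinear (m : nat) (V : lmodType K) (f : seq H -> V) :=
  forall (w : seq H) (i : nat) (a : K) (u v : H), size w = m -> (i < m)%N ->
    f (set_nth 0 w i (a *: u + v)) = a *: f (set_nth 0 w i u) + f (set_nth 0 w i v).

Definition teq (m : nat) (s t : seq (seq H)) :=
  forall (V : lmodType K) (f : seq H -> V), multilinear m f ->
    \sum_(w <- s) f w = \sum_(w <- t) f w.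

Definition tens2 (s : seq (H * H)) : seq (seq H) := [seq [:: p.1; p.2] | p <- s].

Variables (mul : H -> H -> H) (one : H) (cop : H -> seq (H * H)) (eps : H -> K).

Definition is_algebra :=
  bilinear_map mul /\ (forall x y z, mul x (mul y z) = mul (mul x y) z) /\
  (forall x, mul one x = x) /\ (forall x, mul x one = x).

Definition is_coalgebra :=
  (forall (a : K) x y, teq 2 (tens2 (cop (a *: x + y)))
      ([seq [:: a *: p.1; p.2] | p <- cop x] ++ tens2 (cop y))) /\
  (forall (a : K) x y, eps (a *: x + y) = a * eps x + eps y) /\
  (forall x, teq 3 [seq [:: q.1; q.2; p.2] | p <- cop x, q <- cop p.1]
                   [seq [:: p.1; q.1; q.2] | p <- cop x, q <- cop p.2]) /\
  (forall x, \sum_(p <- cop x) eps p.1 *: p.2 = x) /\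
  (forall x, \sum_(p <- cop x) eps p.2 *: p.1 = x).

Definition is_bialgebra :=
  is_algebra /\ is_coalgebra /\
  (forall x y, teq 2 (tens2 (cop (mul x y)))
      [seq [:: mul p.1 q.1; mul p.2 q.2] | p <- cop x, q <- cop y]) /\
  teq 2 (tens2 (cop one)) [:: [:: one; one]] /\
  (forall x y, eps (mul x y) = eps x * eps y) /\ eps one = 1.

Definition is_hopf :=
  is_bialgebra /\
  exists S : H -> H, linear_map S /\
    (forall x, \sum_(p <- cop x) mul (S p.1) p.2 = eps x *: one) /\
    (forall x, \sum_(p <- cop x) mul p.1 (S p.2) = eps x *: one).

(* t : H ⊗ H -> H is a coalgebra morphism (H ⊗ H with the tensor coalgebra
   structure Δ(x⊗y) = (x1⊗y1)⊗(x2⊗y2), ε(x⊗y) = ε(x)ε(y)) *)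
Definition coalg_morph2 (t : H -> H -> H) :=
  bilinear_map t /\
  (forall x y, teq 2 (tens2 (cop (t x y)))
      [seq [:: t p.1 q.1; t p.2 q.2] | p <- cop x, q <- cop y]) /\
  (forall x y, eps (t x y) = eps x * eps y).

(* alpha(x)(y) = x ◁ y is invertible in Hom(H, End H) for the convolution
   (f ⋆ g)(x) = f(x1) ∘ g(x2) with unit x ↦ ε(x) Id *)
Definition left_post_hopf (tri : H -> H -> H) :=
  is_hopf /\ coalg_morph2 tri /\
  (forall x y z, tri x (mul y z) = \sum_(p <- cop x) mul (tri p.1 y) (tri p.2 z)) /\
  (forall x y z, tri x (tri y z) = \sum_(p <- cop x) tri (mul p.1 (tri p.2 y)) z) /\
  (exists beta : H -> H -> H, bilinear_map beta /\
     (forall x y, \sum_(p <- cop x) tri p.1 (beta p.2 y) = eps x *: y) /\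
     (forall x y, \sum_(p <- cop x) beta p.1 (tri p.2 y) = eps x *: y)).

(* gamma(x)(y) = y ▷ x is invertible in Hom(H, End H) *)
Definition right_post_hopf (trr : H -> H -> H) :=
  is_hopf /\ coalg_morph2 trr /\
  (forall x y z, trr (mul x y) z = \sum_(p <- cop z) mul (trr x p.1) (trr y p.2)) /\
  (forall x y z, trr (trr x y) z = \sum_(p <- cop z) trr x (mul (trr y p.1) p.2)) /\
  (exists delta : H -> H -> H, bilinear_map delta /\
     (forall x y, \sum_(p <- cop x) trr (delta p.2 y) p.1 = eps x *: y) /\
     (forall x y, \sum_(p <- cop x) delta p.1 (trr y p.2) = eps x *: y)).

Definition cocommutative :=
  forall x, teq 2 (tens2 (cop x)) [seq [:: p.2; p.1] | p <- cop x].

Definition rho (x : H) : H := x - eps x *: one.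

(* reduced coproduct Δ̃, extended linearly with Δ̃(1) = 0, i.e. Δ̃(x) = Δ̃(ρ x) *)
Definition red_cop (x : H) : seq (H * H) :=
  cop (rho x) ++ [:: (- one, rho x); (- rho x, one)].

Fixpoint red_copn (n : nat) (x : H) : seq (seq H) :=
  match n with
  | 0 => [:: [:: rho x]]
  | k.+1 => flatten [seq [seq [:: p.1, p.2 & behead w] | p <- red_cop (head 0 w)]
                    | w <- red_copn k x]
  end.

Definition connected :=
  forall x, exists n, teq n.+1 (red_copn n x) [::].

End PostHopf.

Definition cop_op (K : fieldType) (H : lmodType K) (cop : H -> seq (H * H)) (x : H) :=
  [seq (p.2, p.1) | p <- cop x].

From HB Require Import structures.
From mathcomp Require Import all_boot all_order all_algebra.
From Stdlib Require Import ClassicalEpsilon.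
Set Implicit Arguments.
Unset Strict Implicit.
Unset Printing Implicit Defensive.
Import GRing.Theory.
Local Open Scope ring_scope.

(* Reversing both the product and the coproduct turns each axiom of the left
   Post-Hopf structure into the corresponding axiom of the right one, so the
   only real point is that gamma(x)(y) = x <| y is invertible in the
   convolution algebra of Delta^cop.  If Delta is cocommutative this is the
   convolution algebra of Delta, where alpha = gamma is invertible by
   hypothesis.  If H is connected, first 1 <| y = y: the map 1 <| - is
   multiplicative and bijective, so 1 <| 1 = 1, and then
   1 <| (1 <| y) = (1 <| 1) <| y = 1 <| y.  Hence gamma = eps Id + gbar with
   gbar(1) = 0, the convolution powers gbar^(n+1) vanish on every x with
   reduced iterated coproduct Delta~^(n) x = 0, and the finite alternating
   series sum_k (-1)^k gbar^k is a two-sided inverse of gamma. *)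

Lemma telescope_alternating (R : pzRingType) (V : lmodType R) (u : nat -> V) M :
  u M = 0 -> \sum_(0 <= i < M) (-1) ^+ i *: (u i + u i.+1) = u 0.
Proof.
move=> uM0; rewrite (telescope_sumr_eq (fun i => - ((-1) ^+ i *: u i))) //.
  by rewrite uM0 scaler0 oppr0 sub0r expr0 scale1r opprK.
by move=> i _; rewrite exprS mulN1r scaleNr !opprK scalerDr addrC.
Qed.

Section Multilinear.
Variables (K : fieldType) (H : lmodType K).
Implicit Types (V : lmodType K).

Lemma linear_map0 V (f : H -> V) : linear_map f -> f 0 = 0.
Proof.
move=> Hf; apply: (addrI (f 0)); rewrite addr0.
by have := Hf 1 0 0; rewrite !scale1r addr0 => <-.
Qed.

Lemma linear_mapD V (f : H -> V) : linear_map f -> forall x y, f (x + y) = f x + f y.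
Proof. by move=> Hf x y; have := Hf 1 x y; rewrite !scale1r. Qed.

Lemma linear_mapZ V (f : H -> V) : linear_map f -> forall a x, f (a *: x) = a *: f x.
Proof. by move=> Hf a x; have := Hf a x 0; rewrite !addr0 (linear_map0 Hf) addr0. Qed.

Lemma linear_mapN V (f : H -> V) : linear_map f -> forall x, f (- x) = - f x.
Proof. by move=> Hf x; rewrite -scaleN1r (linear_mapZ Hf) scaleN1r. Qed.

Lemma linear_map_sum V (f : H -> V) I (r : seq I) (F : I -> H) : linear_map f ->
  f (\sum_(i <- r) F i) = \sum_(i <- r) f (F i).
Proof.
move=> Hf; elim: r => [|i r IHr]; first by rewrite !big_nil (linear_map0 Hf).
by rewrite !big_cons (linear_mapD Hf) IHr.
Qed.

Lemma linear_map_id : linear_map (fun x : H => x).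
Proof. by []. Qed.

Lemma linear_map_comp V (f : H -> V) (g : H -> H) :
  linear_map f -> linear_map g -> linear_map (fun x => f (g x)).
Proof. by move=> Hf Hg a x y; rewrite Hg Hf. Qed.

Lemma linear_map_sub V (f g : H -> V) :
  linear_map f -> linear_map g -> linear_map (fun x => f x - g x).
Proof. by move=> Hf Hg a x y; rewrite Hf Hg scalerBr opprD addrACA. Qed.

Lemma bilinear_swap V (F : H -> H -> V) : bilinear_map F -> bilinear_map (fun u v => F v u).
Proof. by case. Qed.

Lemma bilinear_comp V (F : H -> H -> V) (g1 g2 : H -> H) :
  bilinear_map F -> linear_map g1 -> linear_map g2 ->
  bilinear_map (fun u v => F (g1 u) (g2 v)).
Proof.
move=> [F1 F2] G1 G2.
by split=> [v|u]; [exact: linear_map_comp (F1 _) G1 | exact: linear_map_comp (F2 _) G2].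
Qed.

Definition trilinear_map V (F : H -> H -> H -> V) :=
  forall u v, [/\ linear_map (F ^~ u ^~ v), linear_map (F u ^~ v) & linear_map (F u v)].

Lemma multilinear2_bilinear V (f : seq H -> V) :
  multilinear 2 f -> bilinear_map (fun u v => f [:: u; v]).
Proof.
move=> Hf; split=> [v|u] a x y.
  exact: (Hf [:: x; v] 0%N a x y).
exact: (Hf [:: u; x] 1%N a x y).
Qed.

Lemma bilinear_multilinear2 V (F : H -> H -> V) :
  bilinear_map F -> multilinear 2 (fun w => F w`_0 w`_1).
Proof.
move=> [F1 F2] [|u [|v [|? ?]]] // [|[|i]] a x y //= _ _; [exact: F1 | exact: F2].
Qed.

Lemma trilinear_multilinear3 V (F : H -> H -> H -> V) :
  trilinear_map F -> multilinear 3 (fun w => F w`_0 w`_1 w`_2).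
Proof.
move=> HF [|u [|v [|w [|? ?]]]] // [|[|[|i]]] a x y //= _ _.
- by have [F1 _ _] := HF v w; apply: F1.
- by have [_ F2 _] := HF u w; apply: F2.
- by have [_ _ F3] := HF u v; apply: F3.
Qed.

Lemma multilinear3_trilinear_rev V (f : seq H -> V) :
  multilinear 3 f -> trilinear_map (fun u v w => f [:: w; v; u]).
Proof.
move=> Hf u v; split=> a x y.
- exact: (Hf [:: v; u; x] 2%N a x y).
- exact: (Hf [:: v; x; u] 1%N a x y).
- exact: (Hf [:: x; v; u] 0%N a x y).
Qed.

Lemma teq2_big (s t : seq (seq H)) : teq 2 s t ->
  forall V (F : H -> H -> V), bilinear_map F ->
  \sum_(w <- s) F w`_0 w`_1 = \sum_(w <- t) F w`_0 w`_1.
Proof. by move=> Hst V F /bilinear_multilinear2; apply: Hst. Qed.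

Lemma teq3_big (s t : seq (seq H)) : teq 3 s t ->
  forall V (F : H -> H -> H -> V), trilinear_map F ->
  \sum_(w <- s) F w`_0 w`_1 w`_2 = \sum_(w <- t) F w`_0 w`_1 w`_2.
Proof. by move=> Hst V F /trilinear_multilinear3; apply: Hst. Qed.

Lemma big_grouplike (s : seq (H * H)) (e : H) : teq 2 (tens2 s) [:: [:: e; e]] ->
  forall V (F : H -> H -> V), bilinear_map F -> \sum_(p <- s) F p.1 p.2 = F e e.
Proof. by move=> Hs V F /(teq2_big Hs); rewrite big_map big_seq1. Qed.

Lemma grouplike_op (s : seq (H * H)) (e : H) : teq 2 (tens2 s) [:: [:: e; e]] ->
  teq 2 (tens2 [seq (p.2, p.1) | p <- s]) [:: [:: e; e]].
Proof.
move=> Hs V f /multilinear2_bilinear /bilinear_swap /(big_grouplike Hs) Hf.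
by rewrite /tens2 !big_map big_seq1.
Qed.

End Multilinear.

Section Coalgebra.
Variables (K : fieldType) (H : lmodType K).
Variables (c : H -> seq (H * H)) (eps : H -> K).
Hypothesis Hc : is_coalgebra c eps.

Lemma big_cop_linear (V : lmodType K) (F : H -> H -> V) : bilinear_map F ->
  forall a x y, \sum_(p <- c (a *: x + y)) F p.1 p.2
    = a *: \sum_(p <- c x) F p.1 p.2 + \sum_(p <- c y) F p.1 p.2.
Proof.
move=> HF a x y; have [Hlin _] := Hc; have [F1 _] := HF.
have := teq2_big (Hlin a x y) HF; rewrite big_cat !big_map => ->.
by rewrite scaler_sumr; congr (_ + _); apply: eq_bigr => p _; rewrite (linear_mapZ (F1 _)).
Qed.

Lemma big_cop_coassoc (V : lmodType K) (F : H -> H -> H -> V) : trilinear_map F ->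
  forall x, \sum_(p <- c x) \sum_(q <- c p.1) F q.1 q.2 p.2
    = \sum_(p <- c x) \sum_(q <- c p.2) F p.1 q.1 q.2.
Proof.
move=> HF x; have [_ [_ [Hcoass _]]] := Hc.
by have := teq3_big (Hcoass x) HF; rewrite !big_allpairs_dep.
Qed.

Definition conv (f g : H -> H -> H) x y := \sum_(p <- c x) f p.1 (g p.2 y).

Definition conv_unit x (y : H) := eps x *: y.

Definition conv_invertible f := exists g, bilinear_map g /\
  (forall x y, conv f g x y = conv_unit x y) /\ (forall x y, conv g f x y = conv_unit x y).

Definition conv_pow g n := iter n (conv g) conv_unit.

Lemma conv_unit_bilinear : bilinear_map conv_unit.
Proof.
have [_ [HepsD _]] := Hc.
split=> [y|x] a u v; rewrite /conv_unit; first by rewrite HepsD scalerDl scalerA.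
by rewrite scalerDr !scalerA mulrC.
Qed.

Lemma conv_bilinear f g : bilinear_map f -> bilinear_map g -> bilinear_map (conv f g).
Proof.
move=> Hf [G1 G2]; have [F1 F2] := Hf.
split=> [y|x] a u v; rewrite /conv.
  exact: (big_cop_linear (bilinear_comp Hf (@linear_map_id _ _) (G1 y))).
rewrite scaler_sumr -big_split; apply: eq_bigr => p _.
exact: (linear_map_comp (F2 _) (G2 _)).
Qed.

Lemma conv_unitl f : bilinear_map f -> forall x y, conv conv_unit f x y = f x y.
Proof.
move=> [F1 _] x y; have [_ [_ [_ [Hcounit _]]]] := Hc.
rewrite -{2}(Hcounit x) (linear_map_sum _ _ (F1 y)) /conv /conv_unit.
by apply: eq_bigr => p _; rewrite (linear_mapZ (F1 y)).
Qed.

Lemma conv_unitr f : bilinear_map f -> forall x y, conv f conv_unit x y = f x y.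
Proof.
move=> [F1 F2] x y; have [_ [_ [_ [_ Hcounit]]]] := Hc.
rewrite -{2}(Hcounit x) (linear_map_sum _ _ (F1 y)) /conv /conv_unit.
by apply: eq_bigr => p _; rewrite (linear_mapZ (F1 y)) (linear_mapZ (F2 _)).
Qed.

Lemma conv_assoc f g h : bilinear_map f -> bilinear_map g -> bilinear_map h ->
  forall x y, conv (conv f g) h x y = conv f (conv g h) x y.
Proof.
move=> [F1 F2] [G1 G2] [H1 H2] x y; rewrite /conv.
under [RHS]eq_bigr do rewrite (linear_map_sum _ _ (F2 _)).
apply: (big_cop_coassoc (F := fun u v w => f u (g v (h w y)))) => u v.
split; first exact: F1.
  exact: linear_map_comp (F2 _) (G1 _).
exact: linear_map_comp (F2 _) (linear_map_comp (G2 _) (H1 _)).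
Qed.

Lemma conv_pow_bilinear g n : bilinear_map g -> bilinear_map (conv_pow g n).
Proof.
move=> Hg; elim: n => [|n IHn]; first exact: conv_unit_bilinear.
exact: conv_bilinear.
Qed.

Lemma conv_powSr g n : bilinear_map g ->
  forall x y, conv (conv_pow g n) g x y = conv_pow g n.+1 x y.
Proof.
move=> Hg; elim: n => [|n IHn] x y.
  by rewrite conv_unitl // -[LHS](conv_unitr Hg).
have Hpow := conv_pow_bilinear n Hg.
rewrite conv_assoc //.
by apply: eq_bigr => p _; rewrite IHn.
Qed.

Lemma coalgebra_op : is_coalgebra (cop_op c) eps.
Proof.
have [_ [HepsD [_ [HcounitL HcounitR]]]] := Hc.
split; last split=> //; last split; last by split=> x; rewrite big_map.
- move=> a x y V f /multilinear2_bilinear Hf; have [F1 _] := Hf.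
  rewrite /tens2 big_cat !big_map /= (big_cop_linear (bilinear_swap Hf)) scaler_sumr.
  by congr (_ + _); apply: eq_bigr => p _; rewrite (linear_mapZ (F1 _)).
- move=> x V f /multilinear3_trilinear_rev Hf.
  rewrite !big_allpairs_dep !big_map.
  under eq_bigr do rewrite big_map; under [RHS]eq_bigr do rewrite big_map.
  exact: esym (big_cop_coassoc Hf x).
Qed.

End Coalgebra.

Section Opposite.
Variables (K : fieldType) (H : lmodType K).
Implicit Types (mul t : H -> H -> H) (c : H -> seq (H * H)) (eps : H -> K).

Lemma algebra_op mul one : is_algebra mul one -> is_algebra (fun x y => mul y x) one.
Proof.
move=> [Hmul [HmulA [Hmul1 Hmulx1]]]; split; first exact: bilinear_swap.
by split; [move=> x y z; rewrite HmulA | split].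
Qed.

Lemma cop_morph_op c t :
  (forall x y, teq 2 (tens2 (c (t x y))) [seq [:: t p.1 q.1; t p.2 q.2] | p <- c x, q <- c y]) ->
  forall x y, teq 2 (tens2 (cop_op c (t y x)))
    [seq [:: t q.1 p.1; t q.2 p.2] | p <- cop_op c x, q <- cop_op c y].
Proof.
move=> Ht x y V f /multilinear2_bilinear /bilinear_swap Hf.
have := teq2_big (Ht y x) Hf; rewrite !big_map big_allpairs_dep /= => ->.
by rewrite big_allpairs_dep big_map exchange_big; apply: eq_bigr => p _; rewrite big_map.
Qed.

Lemma bialgebra_op mul one c eps : is_bialgebra mul one c eps ->
  is_bialgebra (fun x y => mul y x) one (cop_op c) eps.
Proof.
move=> [Halg [Hcoalg [HcopM [Hcop1 [HepsM Heps1]]]]].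
split; first exact: algebra_op.
split; first exact: coalgebra_op.
split; first exact: cop_morph_op.
split; first exact: grouplike_op.
by split=> // x y; rewrite HepsM mulrC.
Qed.

Lemma hopf_op mul one c eps : is_hopf mul one c eps ->
  is_hopf (fun x y => mul y x) one (cop_op c) eps.
Proof.
move=> [Hbialg [S [HS [HSl HSr]]]]; split; first exact: bialgebra_op.
by exists S; split=> //; split=> x; rewrite big_map; [exact: HSr | exact: HSl].
Qed.

Lemma coalg_morph2_op c eps t : coalg_morph2 c eps t ->
  coalg_morph2 (cop_op c) eps (fun x y => t y x).
Proof.
move=> [Ht [HcopT HepsT]]; split; first exact: bilinear_swap.
by split; [exact: cop_morph_op | move=> x y; rewrite HepsT mulrC].
Qed.

Lemma conv_op_cocommutative c f g : cocommutative c -> bilinear_map f -> bilinear_map g ->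
  forall x y, conv (cop_op c) f g x y = conv c f g x y.
Proof.
move=> Hcc Hf [G1 _] x y.
have := teq2_big (Hcc x) (bilinear_comp Hf (@linear_map_id _ _) (G1 y)).
by rewrite /conv !big_map => ->.
Qed.

Lemma conv_invertible_op_cocommutative c eps f : cocommutative c -> bilinear_map f ->
  conv_invertible c eps f -> conv_invertible (cop_op c) eps f.
Proof.
move=> Hcc Hf [g [Hg [Hfg Hgf]]]; exists g; split=> //.
by split=> x y; rewrite conv_op_cocommutative.
Qed.

End Opposite.

Section Connected.
Variables (K : fieldType) (H : lmodType K).
Variables (c : H -> seq (H * H)) (eps : H -> K) (one : H) (f : H -> H -> H).
Hypotheses (Hc : is_coalgebra c eps) (Hc1 : teq 2 (tens2 (c one)) [:: [:: one; one]]).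
Hypotheses (Heps1 : eps one = 1) (Hconn : connected one c eps).
Hypotheses (Hf : bilinear_map f) (Hf1 : forall y, f one y = y).

Let Hop := coalgebra_op Hc.
Local Notation conv_op := (conv (cop_op c)).

Lemma big_red_cop (V : lmodType K) (F : H -> H -> V) : bilinear_map F ->
  (forall v, F one v = 0) -> (forall u, F u one = 0) ->
  forall x, \sum_(p <- red_cop one c eps x) F p.1 p.2 = \sum_(p <- c x) F p.1 p.2.
Proof.
move=> HF F1u Fu1 x; have [HF1 HF2] := HF; rewrite /red_cop.
have -> : rho one eps x = (- eps x) *: one + x by rewrite /rho scaleNr addrC.
rewrite big_cat /= !big_cons big_nil (big_cop_linear Hc HF) (big_grouplike Hc1 HF).
by rewrite /= !(linear_mapN (HF1 _)) !F1u Fu1 !oppr0 scaler0 !addr0 add0r.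
Qed.

Definition f_red x y := f x y - conv_unit eps x y.

Lemma f_red_bilinear : bilinear_map f_red.
Proof.
have [F1 F2] := Hf; have [U1 U2] := conv_unit_bilinear Hc.
by split=> [y|x]; apply: linear_map_sub.
Qed.

Lemma f_red1 y : f_red one y = 0.
Proof. by rewrite /f_red Hf1 /conv_unit Heps1 scale1r subrr. Qed.

Lemma conv_f_red_one h : bilinear_map h -> forall y, conv_op f_red h one y = 0.
Proof.
move=> [H1 _] y; rewrite /conv /cop_op (big_grouplike (grouplike_op Hc1)
  (bilinear_comp f_red_bilinear (@linear_map_id _ _) (H1 y))).
exact: f_red1.
Qed.

Definition f_red_fold (z : H) (t : seq H) := foldl (fun acc a => f_red a acc) z t.

Lemma f_red_fold_linear t : linear_map (f_red_fold ^~ t).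
Proof.
have [_ R2] := f_red_bilinear.
by elim: t => [|u t IHt] a x y //=; rewrite /f_red_fold /= (R2 u); apply: IHt.
Qed.

Lemma f_red_fold_set z t i a u v : (i < size t)%N ->
  f_red_fold z (set_nth 0 t i (a *: u + v))
    = a *: f_red_fold z (set_nth 0 t i u) + f_red_fold z (set_nth 0 t i v).
Proof.
have [R1 _] := f_red_bilinear.
elim: t z i => [|w t IHt] z [|i] //= Hi; rewrite /f_red_fold /=; last exact: IHt.
by rewrite (R1 z); apply: f_red_fold_linear.
Qed.

(* Convolution is taken for Delta^cop, so the first tensor factor of
   Delta~^(n) x is the innermost argument. *)
Definition red_eval (h : H -> H -> H) (y : H) (w : seq H) :=
  f_red_fold (h (head 0 w) y) (behead w).

Lemma red_eval_multilinear h y n : bilinear_map h -> multilinear n.+1 (red_eval h y).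
Proof.
move=> [H1 _] [|u t] // [|i] a x z /= [Hsize] Hi; rewrite /red_eval /=.
  by rewrite (H1 y); apply: f_red_fold_linear.
by apply: f_red_fold_set; rewrite Hsize.
Qed.

Lemma big_red_copn h n : bilinear_map h -> (forall y, h one y = 0) ->
  forall x y, \sum_(w <- red_copn one c eps n x) red_eval h y w
    = iter n (conv_op f_red) h x y.
Proof.
elim: n h => [|n IHn] h Hh Hh1 x y.
  have [H1 _] := Hh; rewrite /= big_seq1 /red_eval /= /rho.
  by rewrite -scaleNr addrC (H1 y) Hh1 scaler0 add0r.
have Hconv : bilinear_map (conv_op f_red h) := conv_bilinear Hop f_red_bilinear Hh.
rewrite iterSr -IHn //; last exact: conv_f_red_one.
rewrite /= big_flatten big_map; apply: eq_bigr => w _.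
rewrite big_map /red_eval /= -(linear_map_sum _ _ (f_red_fold_linear _)).
congr f_red_fold; rewrite /conv big_map (big_red_cop (F := fun u v => f_red v (h u y))) //.
- exact: bilinear_swap (bilinear_comp f_red_bilinear (@linear_map_id _ _) (proj1 Hh y)).
- by move=> v; rewrite Hh1 (linear_map0 (proj2 f_red_bilinear _)).
- by move=> u; rewrite f_red1.
Qed.

Local Notation f_red_pow := (conv_pow (cop_op c) eps f_red).

Lemma conv_pow_eventually0 x : exists N, forall m, (N <= m)%N -> forall y, f_red_pow m x y = 0.
Proof.
have [n Hn] := Hconn x; exists n.+1 => m Hm y.
have Hpow : bilinear_map (f_red_pow (m - n.+1).+1).
  exact: (conv_pow_bilinear Hop _ f_red_bilinear).
rewrite /conv_pow -(subnKC Hm) addSnnS iterD -big_red_copn //.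
  by rewrite (Hn _ _ (red_eval_multilinear y Hpow)) big_nil.
exact: conv_f_red_one (conv_pow_bilinear Hop _ f_red_bilinear).
Qed.

Definition vanish_index x : nat :=
  proj1_sig (constructive_indefinite_description _ (conv_pow_eventually0 x)).

Lemma conv_pow_vanish x m : (vanish_index x <= m)%N -> forall y, f_red_pow m x y = 0.
Proof.
by rewrite /vanish_index; case: constructive_indefinite_description => N HN /=; apply: HN.
Qed.

Definition conv_inv x y := \sum_(0 <= i < vanish_index x) (-1) ^+ i *: f_red_pow i x y.

Lemma conv_invE x y M : (vanish_index x <= M)%N ->
  conv_inv x y = \sum_(0 <= i < M) (-1) ^+ i *: f_red_pow i x y.
Proof.
move=> HM; rewrite /conv_inv (big_cat_nat _ HM) //= [X in _ + X]big1_seq ?addr0 //.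
by move=> i /andP[_]; rewrite mem_index_iota => /andP[Hi _]; rewrite conv_pow_vanish ?scaler0.
Qed.

Lemma conv_inv_bilinear : bilinear_map conv_inv.
Proof.
split=> [y|x] a u v.
- set M := maxn (vanish_index (a *: u + v)) (maxn (vanish_index u) (vanish_index v)).
  rewrite !(conv_invE _ (M := M)) ?leq_max ?leqnn ?orbT // scaler_sumr -big_split.
  apply: eq_bigr => i _; have [P1 _] := conv_pow_bilinear Hop i f_red_bilinear.
  by rewrite (P1 y) scalerDr !scalerA mulrC.
- rewrite /conv_inv scaler_sumr -big_split; apply: eq_bigr => i _.
  have [_ P2] := conv_pow_bilinear Hop i f_red_bilinear.
  by rewrite (P2 x) scalerDr !scalerA mulrC.
Qed.

Lemma f_split x y : f x y = conv_unit eps x y + f_red x y.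
Proof. by rewrite /f_red addrC subrK. Qed.

Lemma conv_f_pow i x y : conv_op f (f_red_pow i) x y = f_red_pow i x y + f_red_pow i.+1 x y.
Proof.
have Hpow := conv_pow_bilinear Hop i f_red_bilinear.
rewrite -(conv_unitl Hop Hpow x y) -[f_red_pow i.+1 x y]/(conv_op f_red (f_red_pow i) x y).
by rewrite /conv -big_split; apply: eq_bigr => p _; rewrite f_split.
Qed.

Lemma conv_pow_f i x y : conv_op (f_red_pow i) f x y = f_red_pow i x y + f_red_pow i.+1 x y.
Proof.
have Hpow := conv_pow_bilinear Hop i f_red_bilinear; have [_ P2] := Hpow.
rewrite -(conv_unitr Hop Hpow x y) -(conv_powSr Hop i f_red_bilinear x y).
by rewrite /conv -big_split; apply: eq_bigr => p _; rewrite f_split (linear_mapD (P2 _)).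
Qed.

Lemma conv_inv_right x y : conv_op f conv_inv x y = conv_unit eps x y.
Proof.
set r := x :: [seq p.2 | p <- cop_op c x]; set M := \max_(z <- r) vanish_index z.
have leM z : z \in r -> (vanish_index z <= M)%N by move=> Hz; apply: leq_bigmax_seq.
rewrite -[RHS](@telescope_alternating _ _ (f_red_pow ^~ x ^~ y) M); last first.
  by rewrite conv_pow_vanish ?leM ?mem_head.
rewrite /conv (eq_big_seq (fun p => \sum_(0 <= i < M) (-1) ^+ i *: f p.1 (f_red_pow i p.2 y))).
  by rewrite exchange_big; apply: eq_bigr => i _; rewrite -conv_f_pow /conv scaler_sumr.
move=> p Hp; have [_ F2] := Hf.
rewrite (conv_invE _ (M := M)) ?leM ?inE ?map_f ?orbT // (linear_map_sum _ _ (F2 _)).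
by apply: eq_bigr => i _; rewrite (linear_mapZ (F2 _)).
Qed.

Lemma conv_inv_left x y : conv_op conv_inv f x y = conv_unit eps x y.
Proof.
set r := x :: [seq p.1 | p <- cop_op c x]; set M := \max_(z <- r) vanish_index z.
have leM z : z \in r -> (vanish_index z <= M)%N by move=> Hz; apply: leq_bigmax_seq.
rewrite -[RHS](@telescope_alternating _ _ (f_red_pow ^~ x ^~ y) M); last first.
  by rewrite conv_pow_vanish ?leM ?mem_head.
rewrite /conv (eq_big_seq (fun p => \sum_(0 <= i < M) (-1) ^+ i *: f_red_pow i p.1 (f p.2 y))).
  by rewrite exchange_big; apply: eq_bigr => i _; rewrite -conv_pow_f /conv scaler_sumr.
by move=> p Hp; rewrite (conv_invE _ (M := M)) ?leM ?inE ?map_f ?orbT.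
Qed.

Lemma conv_invertible_op_connected : conv_invertible (cop_op c) eps f.
Proof.
exists conv_inv; split; first exact: conv_inv_bilinear.
by split=> x y; [exact: conv_inv_right | exact: conv_inv_left].
Qed.

End Connected.

Lemma left_post_hopf_tri1 (K : fieldType) (H : lmodType K) (mul : H -> H -> H) (one : H)
  (cop : H -> seq (H * H)) (eps : H -> K) (tri : H -> H -> H) :
  left_post_hopf mul one cop eps tri -> forall y, tri one y = y.
Proof.
move=> [[[[Hmul [_ [Hmul1 Hmulx1]]] [_ [_ [Hcop1 [_ Heps1]]]]] _]
        [[Ht _] [Htri_mul [Htri_tri [beta [Hbeta [Htri_beta Hbeta_tri]]]]]]].
have [M1 M2] := Hmul; have [T1 _] := Ht; have [B1 _] := Hbeta.
have tri1_beta y : tri one (beta one y) = y.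
  rewrite -[RHS]scale1r -Heps1 -Htri_beta.
  by rewrite (big_grouplike Hcop1 (bilinear_comp Ht (@linear_map_id _ _) (B1 y))).
have beta_tri1 y : beta one (tri one y) = y.
  rewrite -[RHS]scale1r -Heps1 -Hbeta_tri.
  by rewrite (big_grouplike Hcop1 (bilinear_comp Hbeta (@linear_map_id _ _) (T1 y))).
have tri1M y z : tri one (mul y z) = mul (tri one y) (tri one z).
  by rewrite Htri_mul (big_grouplike Hcop1 (bilinear_comp Hmul (T1 y) (T1 z))).
have tri11 : tri one one = one.
  by have := tri1M one (beta one one); rewrite Hmul1 tri1_beta Hmulx1.
have tri1_tri1 y : tri one (tri one y) = tri one y.
  have Hact : bilinear_map (fun u v => tri (mul u (tri v one)) y).
    by split=> [v|u]; [exact: linear_map_comp (T1 y) (M1 _)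
      | exact: linear_map_comp (T1 y) (linear_map_comp (M2 u) (T1 one))].
  by rewrite Htri_tri (big_grouplike Hcop1 Hact) tri11 Hmul1.
by move=> y; rewrite -[LHS]beta_tri1 tri1_tri1 beta_tri1.
Qed.

Theorem proposition3p2 (K : fieldType) (H : lmodType K)
  (mul : H -> H -> H) (one : H) (cop : H -> seq (H * H)) (eps : H -> K)
  (tri : H -> H -> H) :
  left_post_hopf mul one cop eps tri ->
  cocommutative cop \/ connected one cop eps ->
  right_post_hopf (fun x y => mul y x) one (cop_op cop) eps (fun x y => tri y x).
Proof.
move=> Hlph Hcop; have [Hhopf [Htri [Htri_mul [Htri_tri Hinv]]]] := Hlph.
have [[_ [Hcoalg [_ [Hcop1 [_ Heps1]]]]] _] := Hhopf.
split; first exact: hopf_op.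
split; first exact: coalg_morph2_op.
split; first by move=> x y z; rewrite Htri_mul big_map.
split; first by move=> x y z; rewrite Htri_tri big_map.
have [Htri_bil _] := Htri.
case: Hcop => [Hcocom | Hconn].
  exact: conv_invertible_op_cocommutative Hcocom Htri_bil Hinv.
exact: conv_invertible_op_connected Hcoalg Hcop1 Heps1 Hconn Htri_bil (left_post_hopf_tri1 Hlph).
Qed.
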